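(* Let $S\subset\mathbb{R}^n_+$ be compact and convex with $0\in S$. Then for every $z\in\mathbb{C}^{*n}$ and $w\in\mathbb{C}^n$, $$H_S(z+w)\le H_S(z)+\varphi_S\big(|w_1|/|z_1|,\dots,|w_n|/|z_n|\big),$$ and in particular, for every $w\in\overline{\mathbb{D}}^n$ and $\delta\in\,]0,1[$, $H_S(\mathbf{1}+\delta w)\le\delta\sigma_S$. Furthermore, for every $z\in\mathbb{C}^{*n}$ and $w\in\mathbb{C}^n$, $$H_S(z+w)\le H_S(z)+\varphi_S\big(\log^+(|w_1|/|z_1|),\dots,\log^+(|w_n|/|z_n|)\big)+(\log2)\,\sigma_S.$$
   Context: $\mathbb{R}_+=[0,\infty)$, $\mathbb{C}^*=\mathbb{C}\setminus\{0\}$, $\mathbb{C}^{*n}=(\mathbb{C}^* )^n$, $\mathbb{D}$ is the open unit disc in $\mathbb{C}$, $\mathbf{1}=(1,\dots,1)$. For compact $S\subset\mathbb{R}^n_+$, $\varphi_S(\xi)=\max_{s\in S}\langle s,\xi\rangle$ for $\xi\in\mathbb{R}^n$ (supporting function), and $\sigma_S=\varphi_S(\mathbf{1})$. The logarithmic supporting function $H_S\colon\mathbb{C}^n\to\mathbb{R}_+$ is $H_S(z)=\varphi_S(\log|z_1|,\dots,\log|z_n|)$ for $z\in\mathbb{C}^{*n}$, and $H_S(z)=\limsup_{\mathbb{C}^{*n}\ni w\to z}H_S(w)$ for $z\in\mathbb{C}^n\setminus\mathbb{C}^{*n}$. *)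

From HB Require Import structures.
From mathcomp Require Import all_boot all_order all_algebra.
From mathcomp Require Import all_classical all_reals all_analysis.
From mathcomp Require Import complex.
Set Implicit Arguments. Unset Strict Implicit. Unset Printing Implicit Defensive.
Import Order.TTheory GRing.Theory Num.Theory.
Import numFieldNormedType.Exports.
Local Open Scope classical_set_scope.
Local Open Scope ring_scope.

Section Defs.
Variables (R : realType) (n : nat).

(* supporting function phi_S(xi) = max_{s in S} <s, xi>  (a max for compact nonempty S) *)
Definition suppf (S : set 'rV[R]_n) (xi : 'rV[R]_n) : R :=
  sup [set \sum_(i < n) s 0 i * xi 0 i | s in S].

Definition sigmaS (S : set 'rV[R]_n) : R := suppf S (const_mx 1).

Definition cabs (z : R[i]) : R := Normc.normc z.

Definition allnz (z : 'rV[R[i]]_n) : Prop := forall i, z 0 i != 0.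

Definition logabs (z : 'rV[R[i]]_n) : 'rV[R]_n := \row_i ln (cabs (z 0 i)).

(* logarithmic supporting function, with values in the extended reals;
   on C^{*n} : phi_S(log|z|); elsewhere the limsup over w -> z, w in C^{*n}. *)
Definition HS (S : set 'rV[R]_n) (z : 'rV[R[i]]_n) : \bar R :=
  if `[< allnz z >] then (suppf S (logabs z))%:E
  else ereal_inf [set ereal_sup [set (suppf S (logabs w))%:E
                                 | w in [set w | allnz w /\
                                          forall i, cabs (w 0 i - z 0 i) < e]]
                 | e in [set e : R | 0 < e]].

Definition convex_rV (S : set 'rV[R]_n) : Prop :=
  forall x y t, S x -> S y -> 0 <= t <= 1 -> S (t *: x + (1 - t) *: y).

(* log^+ t = max(log t, 0) (and log^+ 0 = 0) *)
Definition logplus (t : R) : R := Num.max 0 (ln t).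

End Defs.

From HB Require Import structures.
From mathcomp Require Import all_boot all_order all_algebra.
From mathcomp Require Import all_classical all_reals all_analysis.
From mathcomp Require Import complex.
Import Order.TTheory GRing.Theory Num.Theory.
Import numFieldNormedType.Exports.
Local Open Scope classical_set_scope.
Local Open Scope ring_scope.

(* Every point v near z + w (z in C*^n) satisfies
   log|v_i| <= log(|z_i| + |w_i|) + eps/|z_i|.  Since S lies in R^n_+, phi_S
   is monotone and phi_S(xi) <= phi_S(a) + c phi_S(b) whenever xi <= a + c b,
   c >= 0; hence, also through the limsup that defines H_S off C*^n,
   H_S(z + w) <= phi_S(log(|z_i| + |w_i|)).  The three estimates then reduce
   to the scalar inequalities log(a + b) <= log a + b/a and
   log(a + b) <= log a + log^+(b/a) + log 2. *)

Lemma cabs_ge0 {R : realType} (x : R[i]) : 0 <= cabs x.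
Proof. by case: x => a b; rewrite /cabs /Normc.normc sqrtr_ge0. Qed.

Lemma cabs_gt0 {R : realType} {x : R[i]} : x != 0 -> 0 < cabs x.
Proof.
move=> x0; rewrite lt_neqAle cabs_ge0 andbT eq_sym.
by apply: contra x0 => /eqP/Normc.eq0_normc ->.
Qed.

Lemma cabsD {R : realType} (x y : R[i]) : cabs (x + y) <= cabs x + cabs y.
Proof. exact: le_normcD. Qed.

Lemma cabsZr {R : realType} {d : R} {x : R[i]} : 0 <= d ->
  cabs ((d%:C)%C * x) = d * cabs x.
Proof.
move=> d0; rewrite /cabs Normc.normcM; congr (_ * _).
by rewrite /Normc.normc /= expr0n /= addr0 sqrtr_sqr ger0_norm.
Qed.

Lemma lnD_split {R : realType} {a b : R} : 0 < a -> 0 <= b ->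
  ln (a + b) = ln a + ln (1 + b / a).
Proof.
move=> a0 b0; have ba0 : 0 <= b / a by rewrite divr_ge0 // ltW.
rewrite -lnM ?posrE ?ltr_wpDr //.
by rewrite mulrDr mulr1 mulrC divfK ?lt0r_neq0.
Qed.

Lemma lnD_le {R : realType} {a b : R} : 0 < a -> 0 <= b ->
  ln (a + b) <= ln a + b / a.
Proof.
move=> a0 b0; rewrite lnD_split // lerD2l le_ln1Dx //.
by rewrite (lt_le_trans _ (divr_ge0 b0 (ltW a0))) // oppr_lt0.
Qed.

Lemma ln1D_le_logplus {R : realType} (t : R) : 0 <= t ->
  ln (1 + t) <= logplus t + ln 2.
Proof.
move=> t0; rewrite /logplus; case: (leP t 1) => [t1 | t1].
  apply: (@le_trans _ _ (ln 2)); last by rewrite lerDr le_max lexx.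
  by rewrite ler_ln ?posrE ?ltr_wpDr // -[2]/(1 + 1)%:R natrD lerD2l.
have tpos : 0 < t by rewrite (lt_trans ltr01).
rewrite (max_idPr _); last by rewrite ln_ge0 // ltW.
rewrite -lnM ?posrE // ler_ln ?posrE ?mulr_gt0 ?ltr_wpDr //.
by rewrite mulrDr mulr1 lerD2r ltW.
Qed.

Lemma lnD_le_logplus {R : realType} {a b : R} : 0 < a -> 0 <= b ->
  ln (a + b) <= ln a + logplus (b / a) + ln 2.
Proof.
move=> a0 b0; rewrite lnD_split // -addrA lerD2l ln1D_le_logplus //.
by rewrite divr_ge0 // ltW.
Qed.

Section SupportFunction.
Context {R : realType} {n : nat} {S : set 'rV[R]_n}.
Hypotheses (cS : compact S) (S0 : S 0) (S_ge0 : forall s, S s -> forall i, 0 <= s 0 i).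

Lemma compact_entry_bounded : exists M : R, forall s, S s -> forall i, `|s 0 i| <= M.
Proof.
have [M [_ HM]] := compact_bounded cS.
have M_lt : M < Num.max 0 M + 1.
  by rewrite (le_lt_trans (_ : M <= Num.max 0 M)) ?ltrDl // le_max lexx orbT.
exists (Num.max 0 M + 1) => s Ss i; apply: le_trans (HM _ M_lt s Ss).
rewrite [X in _ <= X]mx_normrE.
exact: (le_bigmax 0 (fun ij : 'I_1 * 'I_n => `|s ij.1 ij.2|) (0, i)).
Qed.

Lemma suppf_ubound (xi : 'rV[R]_n) :
  has_ubound [set \sum_(i < n) s 0 i * xi 0 i | s in S].
Proof.
have [M HM] := compact_entry_bounded.
exists (\sum_(i < n) M * `|xi 0 i|) => _ [s Ss <-].
apply: ler_sum => i _; rewrite (le_trans (ler_norm _)) // normrM.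
by rewrite ler_wpM2r // HM.
Qed.

Lemma le_suppf (xi s : 'rV[R]_n) : S s -> \sum_(i < n) s 0 i * xi 0 i <= suppf S xi.
Proof. by move=> Ss; apply: (ub_le_sup (suppf_ubound xi)); exists s. Qed.

Lemma suppf_le (xi : 'rV[R]_n) (c : R) :
  (forall s, S s -> \sum_(i < n) s 0 i * xi 0 i <= c) -> suppf S xi <= c.
Proof.
move=> H; apply: ge_sup; first by exists (\sum_(i < n) (0 : 'rV[R]_n) 0 i * xi 0 i), 0.
by move=> _ [s Ss <-]; apply: H.
Qed.

Lemma suppf0 : suppf S 0 = 0.
Proof.
apply/eqP; rewrite eq_le suppf_le => [|s _]; last by rewrite big1 // => i; rewrite mxE mulr0.
by rewrite (le_trans _ (le_suppf 0 _ S0)) // big1 // => i; rewrite mxE mulr0.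
Qed.

Lemma suppf_ge0 (xi : 'rV[R]_n) : 0 <= suppf S xi.
Proof. by rewrite (le_trans _ (le_suppf xi _ S0)) // big1 // => i; rewrite mxE mul0r. Qed.

Lemma suppf_le_comb {xi a b : 'rV[R]_n} {c : R} : 0 <= c ->
  (forall i, xi 0 i <= a 0 i + c * b 0 i) -> suppf S xi <= suppf S a + c * suppf S b.
Proof.
move=> c0 xi_le; apply: suppf_le => s Ss.
apply: le_trans (_ : \sum_i s 0 i * a 0 i + c * \sum_i s 0 i * b 0 i <= _).
  rewrite mulr_sumr -big_split /=; apply: ler_sum => i _.
  by rewrite mulrCA -mulrDr ler_wpM2l ?S_ge0.
by rewrite lerD ?ler_wpM2l ?le_suppf.
Qed.

Context {z : 'rV[R[i]]_n}.
Hypothesis z_nz : allnz z.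

Lemma suppf_logabs_near {u v : 'rV[R[i]]_n} {e : R} : allnz v -> 0 <= e ->
  (forall i, cabs (v 0 i - (z + u) 0 i) <= e) ->
  suppf S (logabs v) <=
    suppf S (\row_i ln (cabs (z 0 i) + cabs (u 0 i)))
    + e * suppf S (\row_i (cabs (z 0 i))^-1).
Proof.
move=> v_nz e0 v_near; apply: suppf_le_comb => // i; rewrite !mxE.
have z_pos := cabs_gt0 (z_nz i).
have zu_pos : 0 < cabs (z 0 i) + cabs (u 0 i) by rewrite ltr_wpDr ?cabs_ge0.
have v_le : cabs (v 0 i) <= cabs (z 0 i) + cabs (u 0 i) + e.
  rewrite -(subrK ((z + u) 0 i) (v 0 i)) (le_trans (cabsD _ _)) // addrC.
  by rewrite lerD ?v_near // mxE cabsD.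
apply: (@le_trans _ _ (ln (cabs (z 0 i) + cabs (u 0 i) + e))).
  by rewrite ler_ln ?posrE ?cabs_gt0 ?v_nz // ltr_wpDr.
apply: le_trans (lnD_le zu_pos e0) _; rewrite lerD2l ler_wpM2l //.
by rewrite lef_pV2 ?posrE // lerDl cabs_ge0.
Qed.

Lemma HS_le_suppf_lnD (u : 'rV[R[i]]_n) :
  (HS S (z + u) <= (suppf S (\row_i ln (cabs (z 0 i) + cabs (u 0 i))))%:E)%E.
Proof.
set K := suppf S (\row_i (cabs (z 0 i))^-1).
rewrite /HS; case: (pselect (allnz (z + u))) => [zu_nz | zu_z].
  have zu_near i : cabs ((z + u) 0 i - (z + u) 0 i) <= 0.
    by rewrite subrr /cabs Normc.normc0.
  rewrite asboolT // lee_fin.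
  by rewrite (le_trans (suppf_logabs_near zu_nz (lexx 0) zu_near)) // mul0r addr0.
rewrite asboolF //; apply/lee_addgt0Pr => eps eps0.
have K1 : 0 < K + 1 by rewrite ltr_wpDl ?suppf_ge0.
have e0 : 0 < eps / (K + 1) by rewrite divr_gt0.
apply: ge_ereal_inf; eexists; first by exists (eps / (K + 1)).
apply: ge_ereal_sup => _ [v [v_nz v_near] <-].
rewrite -EFinD lee_fin.
rewrite (le_trans (suppf_logabs_near v_nz (ltW e0) (fun i => ltW (v_near i)))) //.
by rewrite lerD2l mulrAC ler_pdivrMr // ler_pM2l // lerDl.
Qed.

End SupportFunction.

Theorem proposition3p2 (R : realType) (n : nat) (S : set 'rV[R]_n) :
  compact S -> convex_rV S -> (forall s, S s -> forall i, 0 <= s 0 i) -> S 0 ->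
  [/\ (forall z w : 'rV[R[i]]_n, allnz z ->
         (HS S (z + w)%R <= HS S z
            + (suppf S (\row_i (cabs (w 0 i) / cabs (z 0 i)))%R)%:E)%E),
      (forall (w : 'rV[R[i]]_n) (d : R), (forall i, cabs (w 0 i) <= 1) ->
         0 < d < 1 ->
         (HS S ((const_mx 1 : 'rV[R[i]]_n) + (d%:C)%C *: w)%R <= (d * sigmaS S)%R%:E)%E)
    & (forall z w : 'rV[R[i]]_n, allnz z ->
         (HS S (z + w)%R <= HS S z
            + (suppf S (\row_i logplus (cabs (w 0 i) / cabs (z 0 i)))
               + ln 2 * sigmaS S)%R%:E)%E)].
Proof.
move=> cS _ S_ge0 S0; split.
- move=> z w z_nz; apply: le_trans (HS_le_suppf_lnD cS S0 S_ge0 z_nz w) _.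
  rewrite /HS asboolT // -EFinD lee_fin -[X in _ + X]mul1r.
  apply: (suppf_le_comb cS S0 S_ge0 ler01) => i; rewrite !mxE mul1r.
  exact: lnD_le (cabs_gt0 (z_nz i)) (cabs_ge0 _).
- move=> w d w_le1 /andP[d0 _].
  have one_nz : allnz (const_mx 1 : 'rV[R[i]]_n) by move=> i; rewrite mxE oner_neq0.
  apply: le_trans (HS_le_suppf_lnD cS S0 S_ge0 one_nz _) _.
  rewrite lee_fin -[X in _ <= X]add0r -(suppf0 cS S0).
  apply: (suppf_le_comb cS S0 S_ge0 (ltW d0)) => i.
  rewrite !mxE add0r mulr1 /cabs Normc.normc1 -/(cabs _) (cabsZr (ltW d0)).
  apply: le_trans (lnD_le ltr01 (mulr_ge0 (ltW d0) (cabs_ge0 _))) _.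
  by rewrite ln1 add0r divr1 -[X in _ <= X]mulr1 ler_wpM2l ?(ltW d0) ?w_le1.
- move=> z w z_nz; apply: le_trans (HS_le_suppf_lnD cS S0 S_ge0 z_nz w) _.
  rewrite /HS asboolT // -EFinD lee_fin.
  set lp := \row_i logplus (cabs (w 0 i) / cabs (z 0 i)).
  have shift_ln2 : suppf S (\row_i (lp 0 i + ln 2)) <= suppf S lp + ln 2 * sigmaS S.
    by apply: (suppf_le_comb cS S0 S_ge0 (ln_ge0 (ler1n _ 2))) => i; rewrite !mxE mulr1.
  apply: le_trans (lerD (lexx _) shift_ln2); rewrite -[X in _ + X]mul1r.
  apply: (suppf_le_comb cS S0 S_ge0 ler01) => i; rewrite !mxE mul1r addrA.
  exact: lnD_le_logplus (cabs_gt0 (z_nz i)) (cabs_ge0 _).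
Qed.
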